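(* Let $n\ge 2$, inputs $s_j\in\mathbb{Z}_{c_j}$, outputs in $\mathbb{Z}_d$ with $d$ prime, and let $f$ be a function that is not bipartite linear. Then the vertex $p(k|\mathbf{s})=\delta^k_{f(\mathbf{s})}$ of $\mathcal{P}$ is produced by exactly one non-signalling distribution, and this distribution is a vertex of the non-signalling polytope $\mathcal{NS}$.
   Context: Correlator of $p(\mathbf{m}|\mathbf{s})$: $p(k|\mathbf{s})=\sum_{\mathbf{m}:[\sum_j m_j]_d=k}p(\mathbf{m}|\mathbf{s})$; a distribution ''produces'' a correlator if this holds. $\mathcal{P}$ is the polytope of all correlator families. Non-signalling: for every subset $\mathcal{J}$ and inputs $\mathbf{s},\mathbf{s}'$ agreeing outside $\mathcal{J}$, $\sum_{(m_j)_{j\in\mathcal{J}}}p(\mathbf{m}|\mathbf{s})=\sum_{(m_j)_{j\in\mathcal{J}}}p(\mathbf{m}|\mathbf{s}')$; $\mathcal{NS}$ is the polytope of all non-signalling conditional distributions. A function $f$ is bipartite linear if for some nonempty proper $\mathcal{J}\subset\{1,\dots,n\}$ there are functions $f^1$ of $(s_j)_{j\in\mathcal{J}}$ and $f^2$ of $(s_j)_{j\notin\mathcal{J}}$ into $\mathbb{Z}_d$ with $f=[f^1+f^2]_d$. *)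

From HB Require Import structures.
From mathcomp Require Import all_boot all_order all_algebra.
From mathcomp Require Import reals.
Set Implicit Arguments. Unset Strict Implicit. Unset Printing Implicit Defensive.
Import Order.TTheory GRing.Theory Num.Theory.
Local Open Scope ring_scope.

(* Parties are indexed by 'I_n; party j has input s_j in Z_{c j} (= 'I_(c j))
   and output m_j in Z_d (= 'I_d, arithmetic taken mod d). *)
Definition Inp (n : nat) (c : 'I_n -> nat) : finType :=
  {dffun forall j : 'I_n, 'I_(c j)}.
Definition Outp (n d : nat) : finType := {ffun 'I_n -> 'I_d}.

Definition outsum (n d : nat) (m : Outp n d) : nat :=
  ((\sum_(j < n) (m j : nat)) %% d)%N.

(* A conditional distribution p(m|s) is written p s m. *)
Definition cond_distr (R : realType) (n d : nat) (c : 'I_n -> nat)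
  (p : Inp c -> Outp n d -> R) : Prop :=
  (forall s m, 0 <= p s m) /\ (forall s, \sum_(m : Outp n d) p s m = 1).

Definition non_signalling (R : realType) (n d : nat) (c : 'I_n -> nat)
  (p : Inp c -> Outp n d -> R) : Prop :=
  forall (J : {set 'I_n}) (s s' : Inp c),
    (forall j, j \notin J -> s j = s' j) ->
    forall m : Outp n d,
      \sum_(m' : Outp n d | [forall j, (j \notin J) ==> (m' j == m j)]) p s m'
      = \sum_(m' : Outp n d | [forall j, (j \notin J) ==> (m' j == m j)]) p s' m'.

Definition in_NS (R : realType) (n d : nat) (c : 'I_n -> nat)
  (p : Inp c -> Outp n d -> R) : Prop :=
  cond_distr p /\ non_signalling p.

Definition produces (R : realType) (n d : nat) (c : 'I_n -> nat)
  (p : Inp c -> Outp n d -> R) (P : Inp c -> 'I_d -> R) : Prop :=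
  forall (s : Inp c) (k : 'I_d),
    P s k = \sum_(m : Outp n d | outsum m == k) p s m.

Definition delta_corr (R : realType) (n d : nat) (c : 'I_n -> nat)
  (f : Inp c -> 'I_d) : Inp c -> 'I_d -> R :=
  fun s k => (k == f s)%:R.

Definition vertex_NS (R : realType) (n d : nat) (c : 'I_n -> nat)
  (p : Inp c -> Outp n d -> R) : Prop :=
  in_NS p /\
  forall (q1 q2 : Inp c -> Outp n d -> R) (t : R),
    in_NS q1 -> in_NS q2 -> 0 < t < 1 ->
    (forall s m, p s m = t * q1 s m + (1 - t) * q2 s m) ->
    forall s m, q1 s m = q2 s m.

Definition bipartite_linear (n d : nat) (c : 'I_n -> nat) (f : Inp c -> 'I_d)
  : Prop :=
  exists (J : {set 'I_n}) (f1 f2 : Inp c -> 'I_d),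
    [/\ J != set0, J != setT,
        (forall s s' : Inp c, (forall j, j \in J -> s j = s' j) -> f1 s = f1 s'),
        (forall s s' : Inp c, (forall j, j \notin J -> s j = s' j) -> f2 s = f2 s')
      & (forall s, (f s : nat) = ((f1 s + f2 s) %% d)%N)].

From HB Require Import structures.
From mathcomp Require Import all_boot all_order all_algebra.
From mathcomp Require Import reals ring.
Import Order.TTheory GRing.Theory Num.Theory.
Local Open Scope ring_scope.
Set Implicit Arguments. Unset Strict Implicit.

(* A non-signalling distribution producing the correlator delta_{f(s)} is
   supported on the outputs with [sum_j m_j = f(s)].  For a in Z_d^n consider
   the law of the linear form a.m.  Shifting a by a constant only translates
   this law, and non-signalling makes it independent of the inputs of parties
   with a_j = 0; hence changing one input s_j translates the law of a.m by
   a_j (f(s) - f(s')).  If a is not constant and the law were not uniform, it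
   would have no nontrivial period (d is prime), and comparing the two ways
   of changing two inputs s_j, s_k with a_j <> a_k would give
   (a_j - a_k) (f(s) - f(s_j) - f(s_k) + f(s_jk)) = 0, making f bipartite
   linear across {i | a_i = a_j}.  So the law of a.m is uniform for every
   non-constant a, and determined by f for constant a; these laws determine
   the distribution by Fourier inversion on Z_d^n.  The uniform distribution
   on the fibre [sum_j m_j = f(s)] is non-signalling, and uniqueness makes it
   a vertex: both parts of a convex decomposition produce the same
   deterministic correlator. *)

Section InputSurgery.
Variables (n : nat) (c : 'I_n -> nat).

Definition splice (s s' : Inp c) (S : {set 'I_n}) : Inp c :=
  [ffun i => if i \in S then s' i else s i].

Lemma spliceE s s' S i : splice s s' S i = if i \in S then s' i else s i.
Proof. by rewrite ffunE. Qed.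

Definition depends_on (X : Type) (g : Inp c -> X) (J : {set 'I_n}) : Prop :=
  forall s s' : Inp c, (forall j, j \in J -> s j = s' j) -> g s = g s'.

Lemma depends_on_single_changes (X : Type) (g : Inp c -> X) (J : {set 'I_n}) :
  (forall (s s' : Inp c) j, j \notin J -> (forall i, i != j -> s i = s' i) -> g s = g s') ->
  depends_on g J.
Proof.
move=> g_single s s' eqJ.
have splice_seq r : all (fun i => i \notin J) r -> g s = g (splice s s' [set i | i \in r]).
  elim: r => [|j r IHr] /=.
    by move=> _; congr g; apply/ffunP=> i; rewrite spliceE inE.
  case/andP=> jJ /IHr ->; apply: g_single jJ _ => i ij.
  by rewrite !spliceE !inE (negbTE ij).
have -> : s' = splice s s' [set i | i \in enum (~: J)].
  apply/ffunP=> i; rewrite spliceE inE mem_enum inE.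
  by case: (boolP (i \in J)) => // /eqJ.
by apply: splice_seq; apply/allP=> i; rewrite mem_enum inE.
Qed.

Lemma depends_on_splice (X : Type) (g : Inp c -> X) s0 S :
  depends_on (fun s => g (splice s0 s S)) S.
Proof.
move=> s s' eqS; congr g; apply/ffunP=> i; rewrite !spliceE.
by case: (boolP (i \in S)) => // /eqS.
Qed.

End InputSurgery.

Section PrimeResidues.
Variable p' : nat.
Local Notation p := p'.+2.
Hypothesis p_prime : prime p.

Lemma Zp_unit_prime (u : 'I_p) : u != 0 -> u \is a GRing.unit.
Proof.
move=> u_neq0; have -> : u = (u : nat)%:R :> 'I_p by rewrite natr_Zp.
rewrite (@unitZpE p) // prime_coprime // gtnNdvd // lt0n.
by apply: contra u_neq0 => /eqP u0; apply/eqP/val_inj.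
Qed.

Lemma Zp_periodic_const (T : Type) (F : 'I_p -> T) (u : 'I_p) :
  u != 0 -> (forall y, F (y + u) = F y) -> forall y, F y = F 0.
Proof.
move=> u_neq0 Fu y.
have Fku k z : F (z + u *+ k) = F z.
  by elim: k z => [|k IHk] z; rewrite ?mulr0n ?addr0 // mulrSr addrA Fu IHk.
have := Fku (y * u^-1 : 'I_p) 0.
by rewrite -mulr_natr natr_Zp mulrCA mulrV ?Zp_unit_prime // mulr1 add0r.
Qed.

End PrimeResidues.

Lemma subr_swap (V : zmodType) (a b c e : V) : a - b = c - e -> a - c = b - e.
Proof. by move=> H; rewrite -[a](subrK b) H addrC addrA addKr addrC. Qed.

Section BipartiteCriterion.
Variables (n d' : nat) (c : 'I_n -> nat) (f : Inp c -> 'I_d'.+2).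

Lemma bipartite_linear_of_sum (J : {set 'I_n}) (f1 f2 : Inp c -> 'I_d'.+2) :
  J != set0 -> J != setT -> depends_on f1 J -> depends_on f2 (~: J) ->
  (forall s, f s = f1 s + f2 s) -> bipartite_linear f.
Proof.
move=> J_neq0 J_neqT f1J f2J fE; exists J, f1, f2; split=> // [s s' eqJ|s].
  by apply: f2J => j; rewrite inE; apply: eqJ.
by rewrite fE.
Qed.

Variable J : {set 'I_n}.
Hypothesis f_increment_across : forall (z w : Inp c) j k, j \in J -> k \notin J ->
  f z - f (splice z w [set j]) = f (splice z w [set k]) - f (splice z w [set j; k]).

Lemma increment_depends_on j (w : Inp c) :
  j \in J -> depends_on (fun x => f x - f (splice x w [set j])) J.
Proof.
move=> jJ; apply: depends_on_single_changes => x x' k kJ eq_off_k.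
have kj : k != j by apply: contraNneq kJ => ->.
have := f_increment_across x (splice x' w [set j]) jJ kJ.
have -> : splice x (splice x' w [set j]) [set j] = splice x w [set j].
  by apply/ffunP=> i; rewrite !spliceE !inE; case: (i == j).
have -> : splice x (splice x' w [set j]) [set k] = x'.
  apply/ffunP=> i; rewrite !spliceE !inE; case: (eqVneq i k) => [->|ik].
    by rewrite (negbTE kj).
  exact: eq_off_k.
have -> // : splice x (splice x' w [set j]) [set j; k] = splice x' w [set j].
apply/ffunP=> i; rewrite !spliceE !inE; case: (eqVneq i j) => //= ij.
by case: (eqVneq i k) => [->|/eq_off_k].
Qed.

Lemma residual_depends_on (s0 : Inp c) :
  depends_on (fun z => f z - f (splice s0 z J)) (~: J).
Proof.
apply: depends_on_single_changes => z z' j; rewrite inE negbK => jJ eq_off_j.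
have : f z - f (splice z z' [set j]) =
       f (splice s0 z J) - f (splice (splice s0 z J) z' [set j]).
  by apply: (increment_depends_on z' jJ) => i iJ; rewrite spliceE iJ.
have -> : splice z z' [set j] = z'.
  by apply/ffunP=> i; rewrite spliceE inE; case: (eqVneq i j) => [->|/eq_off_j].
have -> : splice (splice s0 z J) z' [set j] = splice s0 z' J.
  apply/ffunP=> i; rewrite !spliceE !inE; case: (eqVneq i j) => [->|/eq_off_j ->].
    by rewrite jJ.
  by case: (i \in J).
exact: subr_swap.
Qed.

Lemma bipartite_linear_of_increment_across (s0 : Inp c) :
  J != set0 -> J != setT -> bipartite_linear f.
Proof.
move=> J_neq0 J_neqT; apply: (@bipartite_linear_of_sum J
  (fun s => f (splice s0 s J)) (fun s => f (splice s0 s (~: J)) - f s0)) => //.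
- exact: depends_on_splice.
- exact: (depends_on_splice (fun t => f t - f s0)).
move=> s; have fE : f s - f (splice s0 s J) =
    f (splice s0 s (~: J)) - f (splice s0 (splice s0 s (~: J)) J).
  by apply: residual_depends_on => i iJ; rewrite spliceE iJ.
have r_s0 : splice s0 (splice s0 s (~: J)) J = s0.
  by apply/ffunP=> i; rewrite !spliceE inE; case: (i \in J).
by rewrite r_s0 in fE; rewrite -fE addrC subrK.
Qed.

End BipartiteCriterion.

Section OutputForms.
Variables (n d' : nat).
Local Notation d := d'.+2.
Local Notation Out := (Outp n d).
Implicit Types (a m z : Out).

Definition out_sum m : 'I_d := \sum_j m j.

Lemma outsumE m : outsum m = out_sum m.
Proof.
rewrite /outsum /out_sum.
elim/big_rec2: _ => [|i x y _ IH]; first by rewrite mod0n.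
by rewrite /= -modnDmr IH.
Qed.

Definition dot a m : 'I_d := \sum_j a j * m j.

Lemma dotDl a a' z : dot (a + a') z = dot a z + dot a' z.
Proof. by rewrite /dot -big_split; apply: eq_bigr => i _; rewrite ffunE mulrDl. Qed.

Lemma dotBr a m m' : dot a (m - m') = dot a m - dot a m'.
Proof. by rewrite /dot -sumrB; apply: eq_bigr => i _; rewrite !ffunE mulrBr. Qed.

Lemma dot_subr_const a v m : dot [ffun j => a j - v] m = dot a m - v * out_sum m.
Proof.
by rewrite /dot /out_sum mulr_sumr -sumrB; apply: eq_bigr => i _; rewrite ffunE mulrBl.
Qed.

Lemma dot_const a v m : (forall j, a j = v) -> dot a m = v * out_sum m.
Proof.
by move=> a_const; rewrite /dot /out_sum mulr_sumr; apply: eq_bigr => j _; rewrite a_const.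
Qed.

Lemma dot_ones m : dot m [ffun _ => 1] = out_sum m.
Proof. by apply: eq_bigr => i _; rewrite ffunE mulr1. Qed.

Definition coord_vec (k : 'I_n) (u : 'I_d) : Out := [ffun i => if i == k then u else 0].

Lemma dot_coord_vec k u z : dot (coord_vec k u) z = u * z k.
Proof.
rewrite /dot (bigD1 k) //= ffunE eqxx big1 ?addr0 // => i ik.
by rewrite ffunE (negbTE ik) mul0r.
Qed.

End OutputForms.

Section DotCounting.
Variables (R : pzRingType) (n d' : nat).
Local Notation d := d'.+2.
Local Notation Out := (Outp n d).
Hypothesis d_prime : prime d.
Implicit Types (a m z : Out) (t : 'I_d).

Section Fibers.
Variables (P : pred Out) (z : Out) (k : 'I_n).
Hypotheses (zk_neq0 : z k != 0) (P_coord_inv : forall a u, P (a + coord_vec k u) = P a).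

Lemma fiber_sum_indep t t' :
  \sum_(a | P a) ((dot a z == t)%:R : R) = \sum_(a | P a) ((dot a z == t')%:R : R).
Proof.
rewrite [RHS](reindex_inj (addIr (coord_vec k ((t' - t) / z k)))) /=.
apply: eq_big => [a|a _]; first by rewrite P_coord_inv.
rewrite dotDl dot_coord_vec mulrVK ?Zp_unit_prime //.
by rewrite -opprB subr_eq addrC subrK.
Qed.

Lemma fiber_sum t : d%:R * \sum_(a | P a) ((dot a z == t)%:R : R) = \sum_(a | P a) 1.
Proof.
have -> : d%:R * \sum_(a | P a) ((dot a z == t)%:R : R) =
    \sum_(t' : 'I_d) \sum_(a | P a) ((dot a z == t')%:R : R).
  under [RHS]eq_bigr => t' _ do rewrite -(fiber_sum_indep t t').
  by rewrite sumr_const card_ord mulr_natl.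
rewrite exchange_big /=; apply: eq_bigr => a _.
by rewrite (bigD1 (dot a z)) //= eqxx big1 ?addr0 // => t' /negbTE; rewrite eq_sym => ->.
Qed.

End Fibers.

Lemma sum1_Outp : \sum_(a : Out) (1 : R) = (d ^ n)%:R.
Proof. by rewrite sumr_const card_ffun !card_ord. Qed.

Lemma dot_eq_count m m0 :
  d%:R * \sum_(a : Out) ((dot a m == dot a m0)%:R : R) =
  (d ^ n)%:R + (m == m0)%:R * ((d ^ n.+1)%:R - (d ^ n)%:R).
Proof.
case: (eqVneq m m0) => [->|m_neq].
  under eq_bigr do rewrite eqxx.
  by rewrite sum1_Outp -natrM -expnS mul1r addrC subrK.
have [k mk_neq] : exists k, m k != m0 k.
  apply/existsP; rewrite -negb_forall; apply: contra m_neq => /forallP m_m0.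
  by apply/eqP/ffunP => i; apply/eqP: (m_m0 i).
have zk_neq0 : (m - m0) k != 0 by rewrite !ffunE subr_eq0.
under eq_bigr do rewrite -subr_eq0 -dotBr.
by rewrite (fiber_sum zk_neq0) // sum1_Outp mul0r addr0.
Qed.

End DotCounting.

Section Distributions.
Variables (R : realType) (n d' : nat) (c : 'I_n -> nat).
Local Notation d := d'.+2.
Local Notation Out := (Outp n d).
Implicit Types (p : Inp c -> Out -> R) (f : Inp c -> 'I_d) (s : Inp c) (a m : Out) (y : 'I_d).

Definition supported_on p f := forall s m, out_sum m != f s -> p s m = 0.

Lemma supported_on_of_produces p f :
  cond_distr p -> produces p (delta_corr R f) -> supported_on p f.
Proof.
move=> [p_ge0 _] p_prod s m m_out; have := p_prod s (out_sum m).
rewrite /delta_corr (negbTE m_out) => /esym/psumr_eq0P; apply=> [m' _|].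
  exact: p_ge0.
by rewrite outsumE.
Qed.

Lemma produces_of_supported_on p f :
  cond_distr p -> supported_on p f -> produces p (delta_corr R f).
Proof.
move=> [_ p_sum1] p_supp s k; rewrite /delta_corr.
have outsum_eq m (t : 'I_d) : (outsum m == t) = (out_sum m == t) by rewrite outsumE.
case: (eqVneq k (f s)) => [->|k_neq] /=.
  rewrite -(p_sum1 s); apply: eq_bigl_supp => m /= pm_neq0.
  by rewrite outsum_eq; symmetry; apply: contraNT pm_neq0 => /p_supp ->.
by rewrite big1 // => m; rewrite outsum_eq => /eqP mk; apply: p_supp; rewrite mk.
Qed.

Definition dot_law p a s y : R := \sum_(m | dot a m == y) p s m.

Lemma dot_law_shift p f a s y v : supported_on p f ->
  dot_law p a s y = dot_law p [ffun j => a j - v] s (y - v * f s).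
Proof.
move=> p_supp; apply: eq_bigl_supp => m /= pm_neq0.
have <- : out_sum m = f s by apply/eqP; apply: contraNT pm_neq0 => /p_supp ->.
by rewrite dot_subr_const (can2_eq (subrK _) (addrK _)) subrK.
Qed.

(* The law of a.m is a sum of marginals over the parties j with a_j = 0. *)
Lemma dot_law_non_signalling p a s s' y : non_signalling p ->
  (forall j, a j != 0 -> s j = s' j) -> dot_law p a s y = dot_law p a s' y.
Proof.
move=> p_NS eq_supp_a.
pose restrict m : Out := [ffun i => if a i == 0 then 0 else m i].
have dot_restrict m : dot a (restrict m) = dot a m.
  by apply: eq_bigr => i _; rewrite ffunE; case: eqP => [->|]; rewrite ?mul0r.
have law_marginals s0 : dot_law p a s0 y =
    \sum_(m0 : Out | (dot a m0 == y) && (restrict m0 == m0))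
      \sum_(m : Out | [forall j, (j \notin [set i | a i == 0]) ==> (m j == m0 j)]) p s0 m.
  rewrite /dot_law (partition_big restrict (fun m0 => (dot a m0 == y) && (restrict m0 == m0))).
    apply: eq_bigr => m0 /andP[m0_y /eqP m0_restr]; apply: eq_bigl => m.
    apply/andP/forallP => [[_ /eqP <-] j|m_m0].
      by apply/implyP; rewrite inE ffunE => /negbTE ->.
    have restr_m : restrict m = m0.
      apply/ffunP=> i; rewrite -m0_restr !ffunE; case: ifP => // /negbT ai.
      by have := m_m0 i; rewrite inE ai => /eqP.
    by rewrite -dot_restrict restr_m m0_y -restr_m.
  move=> m /eqP <-; rewrite dot_restrict eqxx /=; apply/eqP/ffunP=> i.
  by rewrite !ffunE; case: (a i == 0).
rewrite !law_marginals; apply: eq_bigr => m0 _; apply: p_NS => j.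
by rewrite inE; apply: eq_supp_a.
Qed.

Lemma dot_law_single_change p f a (s s' : Inp c) j :
  supported_on p f -> non_signalling p -> (forall i, i != j -> s i = s' i) ->
  forall y, dot_law p a s' y = dot_law p a s (y + a j * (f s - f s')).
Proof.
move=> p_supp p_NS eq_off_j y.
rewrite (dot_law_shift a s' y (a j) p_supp) (dot_law_shift a s _ (a j) p_supp).
rewrite (@dot_law_non_signalling _ _ s' s); last 2 first.
- exact: p_NS.
- move=> i; rewrite ffunE; case: (eqVneq i j) => [->|/eq_off_j ->//].
  by rewrite subrr eqxx.
by congr dot_law; ring.
Qed.

End Distributions.

Section UniformLaws.
Variables (R : realType) (n d' : nat) (c : 'I_n -> nat).
Local Notation d := d'.+2.
Hypothesis d_prime : prime d.
Variables (p : Inp c -> Outp n d -> R) (f : Inp c -> 'I_d) (a : Outp n d).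
Hypotheses (p_supp : supported_on p f) (p_NS : non_signalling p).
Implicit Types (s : Inp c) (y : 'I_d).

Definition uniform_law s := [forall y, dot_law p a s y == dot_law p a s 0].

Lemma uniform_law_indep s s' : uniform_law s = uniform_law s'.
Proof.
have translate_uniform (F G : 'I_d -> R) e :
    (forall y, G y = F (y + e)) -> (forall y, F y = F 0) -> forall y, G y = G 0.
  by move=> GF F_const y; rewrite !GF F_const [RHS]F_const.
apply: (@depends_on_single_changes _ _ _ uniform_law set0) => [{}s {}s' j _ eq_off_j|i];
  last by rewrite inE.
have eq_off_j' i : i != j -> s' i = s i by move/eq_off_j.
apply/forallP/forallP => law_const y; apply/eqP.
- apply: (translate_uniform _ _ _ (dot_law_single_change a p_supp p_NS eq_off_j)).
  by move=> x; apply/eqP.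
- apply: (translate_uniform _ _ _ (dot_law_single_change a p_supp p_NS eq_off_j')).
  by move=> x; apply/eqP.
Qed.

Lemma uniform_law_of_period s u :
  u != 0 -> (forall y, dot_law p a s (y + u) = dot_law p a s y) -> uniform_law s.
Proof.
move=> u_neq0 law_u; apply/forallP => y; apply/eqP.
exact: (Zp_periodic_const d_prime u_neq0 law_u).
Qed.

Lemma increment_across_of_nonuniform s0 :
  ~~ uniform_law s0 -> forall (z w : Inp c) j k, a j != a k ->
  f z - f (splice z w [set j]) = f (splice z w [set k]) - f (splice z w [set j; k]).
Proof.
move=> nonunif z w j k ajk.
set zj := splice z w [set j]; set zk := splice z w [set k].
set zjk := splice z w [set j; k].
have off_k_jk i : i != k -> zj i = zjk i.
  by move=> ik; rewrite !spliceE !inE (negbTE ik) orbF.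
have off_j_jk i : i != j -> zk i = zjk i.
  by move=> ij; rewrite !spliceE !inE (negbTE ij).
have off_j i : i != j -> z i = zj i by move=> ij; rewrite spliceE inE (negbTE ij).
have off_k i : i != k -> z i = zk i by move=> ik; rewrite spliceE inE (negbTE ik).
(* Going around the square z -> zj -> zjk and z -> zk -> zjk translates the law
   of z by e1 and by e2; a nonuniform law has no nonzero period, so e1 = e2. *)
set e1 := a k * (f zj - f zjk) + a j * (f z - f zj).
set e2 := a j * (f zk - f zjk) + a k * (f z - f zk).
have law_path1 y : dot_law p a zjk y = dot_law p a z (y + e1).
  rewrite (dot_law_single_change a p_supp p_NS off_k_jk).
  by rewrite (dot_law_single_change a p_supp p_NS off_j) addrA.
have law_path2 y : dot_law p a zjk y = dot_law p a z (y + e2).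
  rewrite (dot_law_single_change a p_supp p_NS off_j_jk).
  by rewrite (dot_law_single_change a p_supp p_NS off_k) addrA.
have e2_e1 : e2 - e1 = 0.
  apply/eqP; apply: contraNT nonunif => e_neq0.
  rewrite (uniform_law_indep s0 z); apply: uniform_law_of_period e_neq0 _ => y.
  by rewrite -[y in RHS](subrK e1) -law_path1 law_path2; congr dot_law; ring.
have : (a j - a k) * (f zj + f zk - f z - f zjk) = (a j - a k) * 0.
  by rewrite mulr0 -e2_e1 /e1 /e2; ring.
move/(mulrI (Zp_unit_prime d_prime _)); rewrite subr_eq0 => /(_ ajk) sum0.
by apply/eqP; rewrite -subr_eq0 -oppr_eq0 -sum0; apply/eqP; ring.
Qed.

Lemma uniform_law_nonconstant j0 k0 s :
  ~ bipartite_linear f -> a j0 != a k0 -> uniform_law s.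
Proof.
move=> not_bip ajk0; apply/negPn/negP => nonunif; apply: not_bip.
apply: (@bipartite_linear_of_increment_across _ _ _ _ [set i | a i == a j0] _ s).
- move=> z w j k; rewrite !inE => /eqP aj ak.
  by apply: (increment_across_of_nonuniform nonunif); rewrite aj eq_sym.
- by apply/set0Pn; exists j0; rewrite inE.
apply/eqP => J_full; have : k0 \in [set i | a i == a j0] by rewrite J_full inE.
by rewrite inE eq_sym (negbTE ajk0).
Qed.

End UniformLaws.

Section Uniqueness.
Variables (R : realType) (n d' : nat) (c : 'I_n -> nat).
Local Notation d := d'.+2.
Local Notation Out := (Outp n d).
Hypothesis d_prime : prime d.
Implicit Types (p q : Inp c -> Out -> R) (f : Inp c -> 'I_d) (s : Inp c) (a m : Out).

Lemma sum_dot_law p a s : \sum_(y : 'I_d) dot_law p a s y = \sum_m p s m.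
Proof. by rewrite [RHS](partition_big (dot a) predT). Qed.

(* Fourier inversion on Z_d^n: a.m = a.m0 holds for a fraction 1/d of all a,
   unless m = m0. *)
Lemma dot_law_recover p s m0 :
  d%:R * \sum_a dot_law p a s (dot a m0) =
  (d ^ n)%:R * \sum_m p s m + p s m0 * ((d ^ n.+1)%:R - (d ^ n)%:R).
Proof.
have -> : \sum_a dot_law p a s (dot a m0) =
    \sum_m p s m * \sum_a ((dot a m == dot a m0)%:R : R).
  rewrite /dot_law; under eq_bigr do rewrite big_mkcond; rewrite exchange_big /=.
  apply: eq_bigr => m _; rewrite mulr_sumr; apply: eq_bigr => a _.
  by case: eqP; rewrite ?mulr1 ?mulr0.
rewrite mulr_sumr; under eq_bigr do rewrite mulrCA (dot_eq_count _ d_prime) mulrDr.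
rewrite big_split /= mulr_sumr; congr (_ + _); first by apply: eq_bigr => m _; rewrite mulrC.
rewrite (bigD1 m0) //= eqxx mul1r big1 ?addr0 // => m /negbTE ->.
by rewrite mul0r mulr0.
Qed.

Lemma eq_of_dot_law p q s :
  \sum_m p s m = \sum_m q s m -> (forall a y, dot_law p a s y = dot_law q a s y) ->
  forall m, p s m = q s m.
Proof.
move=> sum_pq law_pq m0.
have K_neq0 : (d ^ n.+1)%:R - (d ^ n)%:R != 0 :> R.
  by rewrite subr_eq0 eqr_nat expnS neq_ltn ltn_Pmull ?orbT // expn_gt0.
have := dot_law_recover p s m0; under eq_bigr do rewrite law_pq.
by rewrite dot_law_recover sum_pq => /addrI /(mulIf K_neq0).
Qed.

Lemma dot_law_uniform_value p a s y :
  cond_distr p -> uniform_law p a s -> dot_law p a s y = d%:R^-1.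
Proof.
move=> [_ p_sum1] /forallP unif; have d_neq0 : d%:R != 0 :> R by rewrite pnatr_eq0.
have : d%:R * dot_law p a s 0 = 1.
  rewrite -[RHS](p_sum1 s) -(sum_dot_law p a); under [RHS]eq_bigr do rewrite (eqP (unif _)).
  by rewrite sumr_const card_ord mulr_natl.
by rewrite (eqP (unif y)) => /(congr1 (fun x => d%:R^-1 * x)); rewrite mulKf // mulr1.
Qed.

Lemma dot_law_const_coef p f a s y v :
  cond_distr p -> supported_on p f -> (forall j, a j = v) ->
  dot_law p a s y = (v * f s == y)%:R.
Proof.
move=> [_ p_sum1] p_supp a_const.
have dot_supp m : p s m != 0 -> dot a m = v * f s.
  move=> pm_neq0; rewrite (dot_const _ a_const); congr (_ * _).
  by apply/eqP; apply: contraNT pm_neq0 => /p_supp ->.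
rewrite /dot_law (eq_bigl_supp (fun _ => v * f s == y)) => [|m /= /dot_supp ->//].
by case: (v * f s == y); rewrite ?p_sum1 ?big_pred0.
Qed.

Lemma dot_law_unique p q f a s y :
  (0 < n)%N -> ~ bipartite_linear f ->
  in_NS p -> supported_on p f -> in_NS q -> supported_on q f ->
  dot_law p a s y = dot_law q a s y.
Proof.
move=> n_gt0 not_bip [p_distr p_NS] p_supp [q_distr q_NS] q_supp.
case: (boolP [exists j, exists k, a j != a k]) => [/existsP[j /existsP[k ajk]]|].
  by rewrite !dot_law_uniform_value // (uniform_law_nonconstant d_prime _ _ _ not_bip ajk).
rewrite negb_exists => /forallP a_const; pose i0 := Ordinal n_gt0.
have a_i0 j : a j = a i0.
  by move: (a_const j); rewrite negb_exists => /forallP/(_ i0); rewrite negbK => /eqP.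
by rewrite (dot_law_const_coef s y p_distr p_supp a_i0) (dot_law_const_coef s y q_distr q_supp a_i0).
Qed.

Lemma NS_producer_unique p q f :
  (0 < n)%N -> ~ bipartite_linear f ->
  in_NS p -> produces p (delta_corr R f) -> in_NS q -> produces q (delta_corr R f) ->
  forall s m, p s m = q s m.
Proof.
move=> n_gt0 not_bip p_NS p_prod q_NS q_prod s.
have p_supp := supported_on_of_produces p_NS.1 p_prod.
have q_supp := supported_on_of_produces q_NS.1 q_prod.
apply: eq_of_dot_law; first by rewrite p_NS.1.2 q_NS.1.2.
by move=> a y; apply: (dot_law_unique _ _ _ n_gt0 not_bip).
Qed.

End Uniqueness.

Section FiberDistribution.
Variables (R : realType) (n d' : nat) (c : 'I_n -> nat).
Local Notation d := d'.+2.
Local Notation Out := (Outp n d).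
Hypotheses (d_prime : prime d) (n_gt0 : (0 < n)%N).

Lemma sum_out_sum_eq (t : 'I_d) : \sum_(m : Out) ((out_sum m == t)%:R : R) = (d ^ n.-1)%:R.
Proof.
have d_neq0 : d%:R != 0 :> R by rewrite pnatr_eq0.
apply: (mulfI d_neq0); under eq_bigr do rewrite -dot_ones.
rewrite (@fiber_sum _ _ _ d_prime predT _ (Ordinal n_gt0)) ?ffunE ?oner_neq0 //.
by rewrite sum1_Outp -natrM -expnS prednK.
Qed.

Definition fiber_distr (f : Inp c -> 'I_d) s (m : Out) : R :=
  (out_sum m == f s)%:R / (d ^ n.-1)%:R.

Lemma fiber_distr_supported f : supported_on (fiber_distr f) f.
Proof. by move=> s m /negbTE m_out; rewrite /fiber_distr m_out mul0r. Qed.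

Lemma fiber_distr_in_NS f : in_NS (fiber_distr f).
Proof.
have X_neq0 : (d ^ n.-1)%:R != 0 :> R by rewrite pnatr_eq0 expn_eq0.
split; first split.
- by move=> s m; rewrite divr_ge0 ?ler0n.
- by move=> s; rewrite -mulr_suml sum_out_sum_eq divff.
move=> J s s' eq_off_J m; case: (set_0Vmem J) => [J0|[k kJ]].
  by have -> : s = s' by apply/ffunP => i; apply: eq_off_J; rewrite J0 inE.
rewrite /fiber_distr -!mulr_suml; congr (_ * _).
under eq_bigr do rewrite -dot_ones; under [RHS]eq_bigr do rewrite -dot_ones.
apply: (@fiber_sum_indep _ _ _ d_prime _ _ k) => [|a u]; first by rewrite ffunE oner_neq0.
apply: eq_forallb => j; rewrite !ffunE; case: (eqVneq j k) => [->|_]; first by rewrite kJ.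
by rewrite addr0.
Qed.

End FiberDistribution.

Section Vertex.
Variables (R : realType) (n d' : nat) (c : 'I_n -> nat).
Implicit Types (p q : Inp c -> Outp n d'.+2 -> R) (f : Inp c -> 'I_d'.+2).

Lemma supported_on_mixture p q q' f (t t' : R) :
  (forall s m, 0 <= q s m) -> (forall s m, 0 <= q' s m) -> 0 < t -> 0 <= t' ->
  (forall s m, p s m = t * q s m + t' * q' s m) ->
  supported_on p f -> supported_on q f.
Proof.
move=> q_ge0 q'_ge0 t_gt0 t'_ge0 pE p_supp s m m_out.
move: (p_supp s m m_out); rewrite pE => /eqP.
rewrite paddr_eq0 ?mulr_ge0 ?(ltW t_gt0) // => /andP[+ _].
by rewrite mulf_eq0 gt_eqF //= => /eqP.
Qed.

Lemma vertex_NS_of_unique_producer p f :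
  in_NS p -> produces p (delta_corr R f) ->
  (forall q, in_NS q -> produces q (delta_corr R f) -> forall s m, q s m = p s m) ->
  vertex_NS p.
Proof.
move=> p_NS p_prod p_unique; split=> // q1 q2 t q1_NS q2_NS /andP[t_gt0 t_lt1] pE.
have p_supp := supported_on_of_produces p_NS.1 p_prod.
have t'_gt0 : 0 < 1 - t by rewrite subr_gt0.
have q1_prod : produces q1 (delta_corr R f).
  apply: (produces_of_supported_on q1_NS.1).
  exact: (supported_on_mixture q1_NS.1.1 q2_NS.1.1 t_gt0 (ltW t'_gt0) pE).
have q2_prod : produces q2 (delta_corr R f).
  apply: (produces_of_supported_on q2_NS.1).
  apply: (supported_on_mixture q2_NS.1.1 q1_NS.1.1 t'_gt0 (ltW t_gt0) _ p_supp).
  by move=> s m; rewrite pE addrC.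
by move=> s m; rewrite (p_unique q1) ?(p_unique q2).
Qed.

End Vertex.

Unset Implicit Arguments. Set Strict Implicit.

Theorem proposition2p3p2 (R : realType) (n d : nat) (c : 'I_n -> nat)
  (f : Inp c -> 'I_d) :
  (2 <= n)%N -> prime d -> ~ bipartite_linear f ->
  exists p : Inp c -> Outp n d -> R,
    [/\ in_NS p, produces p (delta_corr R f),
        (forall q : Inp c -> Outp n d -> R,
           in_NS q -> produces q (delta_corr R f) -> forall s m, q s m = p s m)
      & vertex_NS p].
Proof.
case: d f => [|[|d']] f n_ge2 d_prime not_bip //.
have n_gt0 : (0 < n)%N by apply: leq_trans n_ge2.
have p_NS := fiber_distr_in_NS R d_prime n_gt0 f.
have p_prod : produces (fiber_distr R f) (delta_corr R f).
  by apply: (produces_of_supported_on p_NS.1); apply: fiber_distr_supported.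
have p_unique q : in_NS q -> produces q (delta_corr R f) ->
    forall s m, q s m = fiber_distr R f s m.
  by move=> q_NS q_prod; apply: (NS_producer_unique d_prime n_gt0 not_bip).
by exists (fiber_distr R f); split=> //; apply: vertex_NS_of_unique_producer.
Qed.
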